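(* For all natural numbers $n \neq m$, the terms $B\,Y_0\,S^{n}\,I$ and $B\,Y_0\,S^{m}\,I$ are not $\beta$-convertible; that is, the Scott sequence $B Y_0 I,\ B Y_0 S I,\ B Y_0 S S I,\ \ldots$ contains no duplicates.
   Context: Untyped $\lambda$-calculus with $\beta$-conversion. $I = \lambda x.x$, $S = \lambda xyz.\,xz(yz)$, $B = \lambda xyz.\,x(yz)$, and $Y_0 = \lambda f.\,\omega_f\,\omega_f$ with $\omega_f = \lambda x.\,f(xx)$. $A\,C^n$ denotes the left-associated application $A C\cdots C$ with $n$ copies of $C$. *)

From Stdlib Require Import Arith Relations.

Inductive term : Type :=
| Var : nat -> term
| App : term -> term -> term
| Lam : term -> term.

Fixpoint lift (k c : nat) (t : term) : term :=
  match t with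
  | Var n => if Nat.ltb n c then Var n else Var (n + k)
  | App u v => App (lift k c u) (lift k c v)
  | Lam u => Lam (lift k (S c) u)
  end.

Fixpoint subst (j : nat) (s : term) (t : term) : term :=
  match t with
  | Var n =>
      if Nat.ltb n j then Var n
      else if Nat.eqb n j then lift j 0 s
      else Var (n - 1)
  | App u v => App (subst j s u) (subst j s v)
  | Lam u => Lam (subst (S j) s u)
  end.

Inductive beta : term -> term -> Prop :=
| beta_redex : forall t s, beta (App (Lam t) s) (subst 0 s t)
| beta_appl : forall u u' v, beta u u' -> beta (App u v) (App u' v)
| beta_appr : forall u v v', beta v v' -> beta (App u v) (App u v')
| beta_lam : forall u u', beta u u' -> beta (Lam u) (Lam u').

Definition beta_conv : term -> term -> Prop := clos_refl_sym_trans term beta.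

(* Combinators (de Bruijn: index 0 = innermost binder) *)
Definition I : term := Lam (Var 0).
(* S = \x y z. x z (y z) *)
Definition S : term := Lam (Lam (Lam (App (App (Var 2) (Var 0)) (App (Var 1) (Var 0))))).
(* B = \x y z. x (y z) *)
Definition B : term := Lam (Lam (Lam (App (Var 2) (App (Var 1) (Var 0))))).
(* omega_f = \x. f (x x), with f the enclosing binder; Y0 = \f. omega_f omega_f *)
Definition omega_f : term := Lam (App (Var 1) (App (Var 0) (Var 0))).
Definition Y0 : term := Lam (App omega_f omega_f).

Fixpoint app_iter (A C : term) (n : nat) : term :=
  match n with
  | O => A
  | Datatypes.S k => App (app_iter A C k) C
  end.

Definition scott (n : nat) : term := App (app_iter (App B Y0) S n) I.

From Stdlib Require Import Arith Lia Relations List.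
Import ListNotations.

(* Church–Rosser (via Takahashi's parallel reduction) reduces the claim to finding an
   invariant of reduction separating the Scott terms.  Each [scott n] reduces to a term
   in which [Y0] has unfolded into a knot [w w], [w = \x. f (x x)].  Typing terms by
   the number of atom arguments ([S], [I]) they still await, and giving the knot the
   parameter arity [N], the reduct of [scott n] is typable exactly with [N = n].  The
   typing is closed under beta-reduction (the atom redexes [S a], [I a] have typable
   contracta), and it is rigid: a term typable with [N1] and with [N2] forces
   [N1 = N2].  A common reduct of [scott n] and [scott m] would be typable with both. *)

Notation succ := Datatypes.S.

Ltac nat_cmp_cases :=
  repeat match goal with
  | |- context [Nat.ltb ?a ?b] => destruct (Nat.ltb_spec a b)
  | |- context [Nat.eqb ?a ?b] => destruct (Nat.eqb_spec a b)
  end.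

Lemma lift_zero t c : lift 0 c t = t.
Proof.
  induction t in c |- *; simpl.
  - nat_cmp_cases; f_equal; lia.
  - rewrite IHt1, IHt2; reflexivity.
  - rewrite IHt; reflexivity.
Qed.

Lemma lift_lift_comm t k c k' c' : c <= c' ->
  lift k c (lift k' c' t) = lift k' (c' + k) (lift k c t).
Proof.
  induction t in c, c' |- *; intros Hc; simpl.
  - nat_cmp_cases; simpl; nat_cmp_cases; f_equal; lia.
  - rewrite IHt1, IHt2; auto.
  - rewrite IHt by lia; reflexivity.
Qed.

Lemma lift_lift_add t k c k' c' : c' <= c -> c <= c' + k' ->
  lift k c (lift k' c' t) = lift (k + k') c' t.
Proof.
  induction t in c, c' |- *; intros H1 H2; simpl.
  - nat_cmp_cases; simpl; nat_cmp_cases; f_equal; lia.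
  - rewrite IHt1, IHt2; auto.
  - rewrite IHt by lia; reflexivity.
Qed.

Lemma lift_subst_above t k j n s :
  lift k (j + n) (subst n s t) = subst n (lift k j s) (lift k (j + n + 1) t).
Proof.
  induction t in n |- *; simpl.
  - nat_cmp_cases; simpl; nat_cmp_cases; try (f_equal; lia); try lia.
    subst. rewrite (lift_lift_comm s n 0 k j) by lia. f_equal; lia.
  - rewrite IHt1, IHt2; auto.
  - rewrite <- Nat.add_succ_r, IHt. do 3 f_equal; lia.
Qed.

Lemma lift_subst_below t k c j s : c <= j ->
  lift k c (subst j s t) = subst (j + k) s (lift k c t).
Proof.
  induction t in c, j |- *; intros H; simpl.
  - nat_cmp_cases; simpl; nat_cmp_cases; try (f_equal; lia); try lia.
    subst. rewrite lift_lift_add by lia. f_equal; lia.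
  - rewrite IHt1, IHt2; auto.
  - rewrite IHt by lia; reflexivity.
Qed.

Lemma subst_lift_cancel t n s p c : c <= n -> n <= c + p ->
  subst n s (lift (succ p) c t) = lift p c t.
Proof.
  induction t in n, c |- *; intros H1 H2; simpl.
  - nat_cmp_cases; simpl; nat_cmp_cases; f_equal; lia.
  - rewrite IHt1, IHt2; auto.
  - rewrite IHt by lia; reflexivity.
Qed.

Lemma subst_subst t j n s u :
  subst (j + n) s (subst n u t) = subst n (subst j s u) (subst (j + n + 1) s t).
Proof.
  induction t in n |- *; simpl.
  - nat_cmp_cases; simpl; nat_cmp_cases; try (f_equal; lia); try lia.
    + rewrite lift_subst_below by lia. reflexivity.
    + rewrite Nat.add_1_r, subst_lift_cancel by lia. reflexivity.
  - rewrite IHt1, IHt2; auto.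
  - rewrite <- Nat.add_succ_r, IHt. do 3 f_equal; lia.
Qed.

(** * Church–Rosser *)

Inductive par : term -> term -> Prop :=
| par_var n : par (Var n) (Var n)
| par_app u u' v v' : par u u' -> par v v' -> par (App u v) (App u' v')
| par_lam u u' : par u u' -> par (Lam u) (Lam u')
| par_beta t t' s s' : par t t' -> par s s' -> par (App (Lam t) s) (subst 0 s' t').

Lemma par_refl t : par t t.
Proof. induction t; constructor; auto. Qed.

Lemma par_lift t t' : par t t' -> forall k c, par (lift k c t) (lift k c t').
Proof.
  induction 1; intros k c; simpl.
  - apply par_refl.
  - constructor; auto.
  - constructor; auto.
  - pose proof (lift_subst_above t' k c 0 s') as E. rewrite !Nat.add_0_r in E.
    rewrite E, Nat.add_1_r. constructor; auto.
Qed.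

Lemma par_subst t t' : par t t' -> forall s s', par s s' -> forall j,
  par (subst j s t) (subst j s' t').
Proof.
  induction 1; intros s0 s0' Hs j; simpl.
  - nat_cmp_cases; auto using par_refl, par_lift.
  - constructor; auto.
  - constructor; auto.
  - pose proof (subst_subst t' j 0 s0' s') as E. rewrite !Nat.add_0_r in E.
    rewrite E, Nat.add_1_r. constructor; auto.
Qed.

Fixpoint develop (t : term) : term :=
  match t with
  | Var n => Var n
  | Lam u => Lam (develop u)
  | App (Lam u) v => subst 0 (develop v) (develop u)
  | App u v => App (develop u) (develop v)
  end.

Lemma par_develop t t' : par t t' -> par t' (develop t).
Proof.
  induction 1; simpl.
  - constructor.
  - destruct u; try (constructor; auto).
    inversion H; subst. inversion IHpar1; subst. constructor; auto.
  - constructor; auto.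
  - apply par_subst; auto.
Qed.

Section Triangle.
Variables (A : Type) (R : relation A) (dev : A -> A).
Hypothesis triangle : forall x y, R x y -> R y (dev x).

Lemma triangle_strip x z : clos_refl_trans_1n A R x z -> forall y, R x y ->
  exists w, clos_refl_trans_1n A R y w /\ R z w.
Proof.
  induction 1 as [x | x x1 z Hx1 _ IH]; intros y Hy.
  - exists y. split; [constructor | exact Hy].
  - destruct (IH (dev x) (triangle x x1 Hx1)) as [w [Hw Hzw]].
    exists w. split; [econstructor; [apply triangle, Hy | exact Hw] | exact Hzw].
Qed.

Lemma triangle_confluent x y z :
  clos_refl_trans_1n A R x y -> clos_refl_trans_1n A R x z ->
  exists w, clos_refl_trans_1n A R y w /\ clos_refl_trans_1n A R z w.
Proof.
  intros Hy; revert z. induction Hy as [x | x x1 y Hx1 _ IH]; intros z Hz.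
  - exists z. split; [exact Hz | constructor].
  - destruct (triangle_strip x z Hz x1 Hx1) as [v [Hv Hzv]].
    destruct (IH v Hv) as [w [Hyw Hvw]].
    exists w. split; [exact Hyw | econstructor; eassumption].
Qed.

End Triangle.

Definition red : relation term := clos_refl_trans term beta.

Lemma red_app u u' v v' : red u u' -> red v v' -> red (App u v) (App u' v').
Proof.
  intros Hu Hv. apply rt_trans with (App u' v).
  - induction Hu; [apply rt_step, beta_appl; assumption | apply rt_refl | eapply rt_trans; eassumption].
  - induction Hv; [apply rt_step, beta_appr; assumption | apply rt_refl | eapply rt_trans; eassumption].
Qed.

Lemma red_lam u u' : red u u' -> red (Lam u) (Lam u').
Proof.
  induction 1; [apply rt_step, beta_lam; assumption | apply rt_refl | eapply rt_trans; eassumption].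
Qed.

Lemma red_beta t s u : subst 0 s t = u -> red (App (Lam t) s) u.
Proof. intros <-. apply rt_step, beta_redex. Qed.

Lemma par_red t u : par t u -> red t u.
Proof.
  induction 1.
  - apply rt_refl.
  - apply red_app; assumption.
  - apply red_lam; assumption.
  - eapply rt_trans; [apply red_app; [apply red_lam|]; eassumption | apply red_beta; reflexivity].
Qed.

Lemma beta_par t u : beta t u -> par t u.
Proof. induction 1; constructor; auto using par_refl. Qed.

Lemma red_par_star t u : red t u <-> clos_refl_trans_1n term par t u.
Proof.
  split.
  - intros H. apply clos_rt_rt1n in H.
    induction H; [constructor | econstructor; [apply beta_par|]; eassumption].
  - induction 1; [apply rt_refl | eapply rt_trans; [apply par_red|]; eassumption].
Qed.

Lemma red_confluent t t1 t2 : red t t1 -> red t t2 -> exists u, red t1 u /\ red t2 u.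
Proof.
  rewrite !red_par_star. intros H1 H2.
  destruct (triangle_confluent term par develop par_develop t t1 t2 H1 H2) as [u [Hu1 Hu2]].
  exists u. rewrite !red_par_star. auto.
Qed.

Lemma red_conv t u : red t u -> beta_conv t u.
Proof.
  induction 1; [apply rst_step; assumption | apply rst_refl | eapply rst_trans; eassumption].
Qed.

Lemma church_rosser t u : beta_conv t u -> exists v, red t v /\ red u v.
Proof.
  induction 1 as [x y Hxy | x | x y _ [v [Hx Hy]] | x y z _ [v1 [Hx Hy1]] _ [v2 [Hy2 Hz]]].
  - exists y. split; [apply rt_step, Hxy | apply rt_refl].
  - exists x. split; apply rt_refl.
  - exists v. auto.
  - destruct (red_confluent y v1 v2 Hy1 Hy2) as [w [H1 H2]].
    exists w. split; eapply rt_trans; eassumption.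
Qed.

(** * The arity typing *)

(* [arity N G j t]: [t] still expects [j] atom arguments, atoms being [S] (any rank
   [>= 2]), [I] (rank 1) and atom variables.  A knot, the self-application of two
   halves [\x. B] with [B] of arity [N], has arity [N]. *)
Inductive decl := DAtom (r : nat) | DArity (j : nat) | DHalf.

Inductive atom (G : list decl) : nat -> term -> Prop :=
| atom_S r : 2 <= r -> atom G r S
| atom_I : atom G 1 I
| atom_var i r : nth_error G i = Some (DAtom r) -> atom G r (Var i).

Inductive arity (N : nat) : list decl -> nat -> term -> Prop :=
| arity_var G i j : nth_error G i = Some (DArity j) -> arity N G j (Var i)
| arity_knot G X Y : half N G X -> half N G Y -> arity N G N (App X Y)
| arity_app G j M a : arity N G (succ j) M -> atom G j a -> arity N G j (App M a)
| arity_spine G j h a K :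
    atom G (succ j) h -> atom G j a -> arity N G j K -> arity N G j (App (App h a) K)
| arity_lam G j B : arity N (DAtom j :: G) j B -> arity N G (succ j) (Lam B)
| arity_let G j B K :
    arity N (DArity j :: G) j B -> arity N G j K -> arity N G j (App (Lam B) K)
| arity_out G a Y : atom G 0 a -> arity N G 0 Y -> arity N G 0 (App a Y)
with half (N : nat) : list decl -> term -> Prop :=
| half_var G i : nth_error G i = Some DHalf -> half N G (Var i)
| half_lam G B : arity N (DHalf :: G) N B -> half N G (Lam B).

Scheme arity_ind' := Induction for arity Sort Prop
with half_ind' := Induction for half Sort Prop.
Combined Scheme arity_half_ind from arity_ind', half_ind'.

Definition judge (N : nat) (G : list decl) (d : decl) (t : term) : Prop :=
  match d with
  | DAtom r => atom G r t
  | DArity j => arity N G j t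
  | DHalf => half N G t
  end.

Section Typing.
Variable N : nat.

Lemma judge_var G i d : nth_error G i = Some d -> judge N G d (Var i).
Proof. destruct d; constructor; assumption. Qed.

Lemma judge_var_lift G1 G2 D i d : nth_error (G1 ++ G2) i = Some d ->
  judge N (G1 ++ D ++ G2) d (lift (length D) (length G1) (Var i)).
Proof.
  intros Hi; simpl; destruct (Nat.ltb_spec i (length G1)); apply judge_var.
  - rewrite nth_error_app1 in * by assumption. exact Hi.
  - rewrite nth_error_app2 in Hi by assumption.
    rewrite !nth_error_app2 by lia.
    replace (i + length D - length G1 - length D) with (i - length G1) by lia. exact Hi.
Qed.

Lemma atom_lift G1 G2 D r t : atom (G1 ++ G2) r t ->
  atom (G1 ++ D ++ G2) r (lift (length D) (length G1) t).
Proof.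
  destruct 1 as [r Hr | | i r Hi].
  - constructor; assumption.
  - constructor.
  - exact (judge_var_lift G1 G2 D i (DAtom r) Hi).
Qed.

Lemma arity_half_lift :
  (forall G j t, arity N G j t -> forall G1 G2 D, G = G1 ++ G2 ->
     arity N (G1 ++ D ++ G2) j (lift (length D) (length G1) t)) /\
  (forall G t, half N G t -> forall G1 G2 D, G = G1 ++ G2 ->
     half N (G1 ++ D ++ G2) (lift (length D) (length G1) t)).
Proof.
  apply arity_half_ind; intros; subst; simpl.
  - exact (judge_var_lift G1 G2 D i (DArity j) e).
  - apply arity_knot; auto.
  - apply arity_app; auto using atom_lift.
  - apply arity_spine; auto using atom_lift.
  - apply arity_lam. apply (H (DAtom j :: G1)); reflexivity.
  - apply arity_let; auto. apply (H (DArity j :: G1)); reflexivity.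
  - apply arity_out; auto using atom_lift.
  - exact (judge_var_lift G1 G2 D i DHalf e).
  - apply half_lam. apply (H (DHalf :: G1)); reflexivity.
Qed.

Lemma judge_weaken G D d t : judge N G d t -> judge N (D ++ G) d (lift (length D) 0 t).
Proof.
  destruct d; simpl.
  - apply (atom_lift []).
  - intros H; apply ((proj1 arity_half_lift) _ _ _ H []); reflexivity.
  - intros H; apply ((proj2 arity_half_lift) _ _ H []); reflexivity.
Qed.

Lemma judge_var_subst G1 G2 d d' i s :
  nth_error (G1 ++ d :: G2) i = Some d' -> judge N G2 d s ->
  judge N (G1 ++ G2) d' (subst (length G1) s (Var i)).
Proof.
  intros Hi Hs; simpl; nat_cmp_cases.
  - apply judge_var. rewrite nth_error_app1 in * by assumption. exact Hi.
  - subst i. rewrite nth_error_app2, Nat.sub_diag in Hi by lia. injection Hi as <-.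
    exact (judge_weaken G2 G1 d s Hs).
  - apply judge_var. rewrite nth_error_app2 in Hi by lia. rewrite nth_error_app2 by lia.
    replace (i - length G1) with (succ (i - 1 - length G1)) in Hi by lia. exact Hi.
Qed.

Lemma atom_subst G1 G2 d r t s : atom (G1 ++ d :: G2) r t -> judge N G2 d s ->
  atom (G1 ++ G2) r (subst (length G1) s t).
Proof.
  destruct 1 as [r Hr | | i r Hi]; intros Hs.
  - constructor; assumption.
  - constructor.
  - exact (judge_var_subst G1 G2 d (DAtom r) i s Hi Hs).
Qed.

Lemma arity_half_subst :
  (forall G j t, arity N G j t -> forall G1 d G2 s, G = G1 ++ d :: G2 -> judge N G2 d s ->
     arity N (G1 ++ G2) j (subst (length G1) s t)) /\
  (forall G t, half N G t -> forall G1 d G2 s, G = G1 ++ d :: G2 -> judge N G2 d s ->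
     half N (G1 ++ G2) (subst (length G1) s t)).
Proof.
  apply arity_half_ind; intros; subst; simpl.
  - exact (judge_var_subst G1 G2 d (DArity j) i s e H0).
  - apply arity_knot; eauto.
  - apply arity_app; eauto using atom_subst.
  - apply arity_spine; eauto using atom_subst.
  - apply arity_lam. apply (H (DAtom j :: G1) d); auto.
  - apply arity_let; eauto. apply (H (DArity j :: G1) d); auto.
  - apply arity_out; eauto using atom_subst.
  - exact (judge_var_subst G1 G2 d DHalf i s e H0).
  - apply half_lam. apply (H (DHalf :: G1) d); auto.
Qed.

Lemma arity_subst0 G d j t s : arity N (d :: G) j t -> judge N G d s ->
  arity N G j (subst 0 s t).
Proof. intros Ht Hs. exact ((proj1 arity_half_subst) _ _ _ Ht [] d G s eq_refl Hs). Qed.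

(** * Subject reduction *)

Lemma atom_normal G r t t' : atom G r t -> ~ beta t t'.
Proof.
  destruct 1; intros Hb;
    repeat match goal with H : beta _ _ |- _ => inversion H; subst; clear H end.
Qed.

(* The redexes [S a] and [I a] are the only ones an atom can create; their
   contracta [\y z. a z (y z)] and [a] are typed by [arity_let] and [arity_out]. *)
Lemma arity_spine_beta G j h a K u : atom G (succ j) h -> atom G j a -> arity N G j K ->
  beta (App h a) u -> arity N G j (App u K).
Proof.
  intros Hh Ha HK Hb. inversion Hb as [? ? | ? ? ? Hh' | ? ? ? Ha'|]; subst.
  - inversion Hh as [r Hr | | ]; subst.
    + destruct j as [|j]; [lia|]. simpl.
      apply arity_let; [|exact HK]. apply arity_lam, arity_spine.
      * exact (judge_weaken G [DAtom j; DArity (succ j)] (DAtom (succ j)) a Ha).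
      * apply atom_var; reflexivity.
      * apply arity_app; [apply arity_var | apply atom_var]; reflexivity.
    + simpl. rewrite lift_zero. apply arity_out; assumption.
  - destruct (atom_normal _ _ _ _ Hh Hh').
  - destruct (atom_normal _ _ _ _ Ha Ha').
Qed.

Lemma arity_half_beta :
  (forall G j t, arity N G j t -> forall t', beta t t' -> arity N G j t') /\
  (forall G t, half N G t -> forall t', beta t t' -> half N G t').
Proof.
  apply arity_half_ind.
  - intros G i j _ t' Hb. inversion Hb.
  - intros G X Y HX IHX HY IHY t' Hb. inversion Hb; subst.
    + inversion HX; subst. eapply arity_subst0; eassumption.
    + apply arity_knot; auto.
    + apply arity_knot; auto.
  - intros G j M a HM IHM Ha t' Hb. inversion Hb; subst.
    + inversion HM; subst. eapply arity_subst0; eassumption.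
    + apply arity_app; auto.
    + exfalso. eapply atom_normal; eassumption.
  - intros G j h a K Hh Ha HK IHK t' Hb. inversion Hb; subst.
    + eapply arity_spine_beta; eassumption.
    + apply arity_spine; auto.
  - intros G j B HB IHB t' Hb. inversion Hb; subst. apply arity_lam; auto.
  - intros G j B K HB IHB HK IHK t' Hb. inversion Hb as [| ? ? ? HL | |]; subst.
    + eapply arity_subst0; eassumption.
    + inversion HL; subst. apply arity_let; auto.
    + apply arity_let; auto.
  - intros G a Y Ha HY IHY t' Hb. inversion Hb; subst.
    + inversion Ha; lia.
    + exfalso. eapply atom_normal; eassumption.
    + apply arity_out; auto.
  - intros G i _ t' Hb. inversion Hb.
  - intros G B HB IHB t' Hb. inversion Hb; subst. apply half_lam; auto.
Qed.

Lemma arity_red G j t t' : red t t' -> arity N G j t -> arity N G j t'.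
Proof.
  induction 1; auto. intros Hx. exact ((proj1 arity_half_beta) _ _ _ Hx _ H).
Qed.

End Typing.

(** * Rigidity *)

(* Arity declarations are deliberately never compatible with each other: the
   rigidity argument must rule out comparing two variables of unknown arity. *)
Inductive decl_compat : decl -> decl -> Prop :=
| compat_atom r : decl_compat (DAtom r) (DAtom r)
| compat_half_arity j : decl_compat DHalf (DArity j)
| compat_arity_half j : decl_compat (DArity j) DHalf.

Definition ctx_compat (G1 G2 : list decl) : Prop :=
  forall i d1 d2, nth_error G1 i = Some d1 -> nth_error G2 i = Some d2 -> decl_compat d1 d2.

Lemma ctx_compat_nil : ctx_compat [] [].
Proof. intros [|i]; discriminate. Qed.

Lemma ctx_compat_cons G1 G2 d1 d2 :
  ctx_compat G1 G2 -> decl_compat d1 d2 -> ctx_compat (d1 :: G1) (d2 :: G2).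
Proof.
  intros HG Hd [|i] e1 e2 H1 H2; simpl in *.
  - injection H1 as <-. injection H2 as <-. exact Hd.
  - exact (HG i e1 e2 H1 H2).
Qed.

Lemma ctx_compat_sym G1 G2 : ctx_compat G1 G2 -> ctx_compat G2 G1.
Proof. intros HG i d1 d2 H1 H2. destruct (HG i d2 d1 H2 H1); constructor. Qed.

Ltac invert_typing :=
  repeat match goal with
  | H : arity _ _ _ (Lam _) |- _ => inversion H; subst; clear H
  | H : arity _ _ _ (App _ _) |- _ => inversion H; subst; clear H
  | H : arity _ _ _ (Var _) |- _ => inversion H; subst; clear H
  | H : half _ _ (Lam _) |- _ => inversion H; subst; clear H
  | H : half _ _ (App _ _) |- _ => inversion H
  | H : half _ _ (Var _) |- _ => inversion H; subst; clear H
  | H : atom _ _ (App _ _) |- _ => inversion H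
  | H : atom _ _ (Lam _) |- _ => inversion H; subst; clear H
  | H : atom _ _ (Var _) |- _ => inversion H; subst; clear H
  | H : nth_error (_ :: _) _ = Some _ |- _ => simpl in H; try (inversion H; subst; clear H)
  end; try lia.

(* The binders of [S] get ranks [r-1], [r-2], [r-3], so the head of its body has
   the wrong rank for [arity_spine]. *)
Lemma arity_S_false N G j : ~ arity N G j S.
Proof. intros H. unfold S in H. invert_typing. Qed.

Lemma half_S_false N G : ~ half N G S.
Proof. intros H. unfold S in H. invert_typing. Qed.

Lemma arity_I_false N G j : ~ arity N G j I.
Proof. intros H. unfold I in H. invert_typing. Qed.

Lemma half_I_false N G : ~ half N G I.
Proof. intros H. unfold I in H. invert_typing. Qed.

Lemma atom_arity_clash N G1 G2 r j t :
  ctx_compat G1 G2 -> atom G1 r t -> arity N G2 j t -> False.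
Proof.
  intros HG Ht1 Ht2. destruct Ht1 as [r Hr | | i r Hi].
  - exact (arity_S_false _ _ _ Ht2).
  - exact (arity_I_false _ _ _ Ht2).
  - inversion Ht2 as [? ? ? Hi' | | | | | |]; subst.
    pose proof (HG _ _ _ Hi Hi') as Hc. inversion Hc.
Qed.

Lemma atom_half_clash N G1 G2 r t :
  ctx_compat G1 G2 -> atom G1 r t -> half N G2 t -> False.
Proof.
  intros HG Ht1 Ht2. destruct Ht1 as [r Hr | | i r Hi].
  - exact (half_S_false _ _ Ht2).
  - exact (half_I_false _ _ Ht2).
  - inversion Ht2 as [? ? Hi' |]; subst.
    pose proof (HG _ _ _ Hi Hi') as Hc. inversion Hc.
Qed.

Ltac clash :=
  exfalso;
  match goal with
  | HG : ctx_compat ?G1 ?G2, H1 : atom ?G1 _ ?t, H2 : arity _ ?G2 _ ?t |- _ =>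
      exact (atom_arity_clash _ _ _ _ _ _ HG H1 H2)
  | HG : ctx_compat ?G1 ?G2, H1 : arity _ ?G1 _ ?t, H2 : atom ?G2 _ ?t |- _ =>
      exact (atom_arity_clash _ _ _ _ _ _ (ctx_compat_sym _ _ HG) H2 H1)
  | HG : ctx_compat ?G1 ?G2, H1 : atom ?G1 _ ?t, H2 : half _ ?G2 ?t |- _ =>
      exact (atom_half_clash _ _ _ _ _ HG H1 H2)
  | HG : ctx_compat ?G1 ?G2, H1 : half _ ?G1 ?t, H2 : atom ?G2 _ ?t |- _ =>
      exact (atom_half_clash _ _ _ _ _ (ctx_compat_sym _ _ HG) H2 H1)
  | H : atom _ _ (App _ _) |- _ => inversion H
  | H : half _ _ (App _ _) |- _ => inversion H
  | H : atom _ 0 (Lam _) |- _ => inversion H; lia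
  end.

(* The second clause covers a half [Lam B] whose body the other derivation reads
   as the function of an [arity_let]. *)
Lemma arity_half_rigid N1 :
  (forall G1 j t, arity N1 G1 j t ->
     forall N2 G2, ctx_compat G1 G2 -> arity N2 G2 j t -> N1 = N2) /\
  (forall G1 t, half N1 G1 t ->
     forall N2 G2 j B, t = Lam B -> ctx_compat G1 G2 ->
       arity N2 (DArity j :: G2) N1 B -> N1 = N2).
Proof.
  apply arity_half_ind.
  - intros G1 i j Hi N2 G2 HG H2. inversion H2 as [? ? ? Hi' | | | | | |]; subst.
    pose proof (HG _ _ _ Hi Hi') as Hc. inversion Hc.
  - intros G1 X Y HX IHX HY _ N2 G2 HG H2.
    inversion H2; subst; try clash.
    + reflexivity.
    + eapply IHX; eauto.
  - intros G1 j M a _ IHM Ha N2 G2 HG H2.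
    inversion H2; subst; try clash. eapply IHM; eauto.
  - intros G1 j h a K Hh Ha HK IHK N2 G2 HG H2.
    inversion H2; subst; try clash. eapply IHK; eauto.
  - intros G1 j B _ IHB N2 G2 HG H2.
    inversion H2; subst. eapply IHB; eauto. apply ctx_compat_cons; [exact HG | constructor].
  - intros G1 j B K _ IHB HK IHK N2 G2 HG H2.
    inversion H2 as [| ? X Y HX | | | | |]; subst; try clash.
    + inversion HX; subst. eapply IHB; eauto.
      apply ctx_compat_cons; [exact HG | constructor].
    + eapply IHK; eauto.
  - intros G1 a Y Ha HY IHY N2 G2 HG H2.
    inversion H2; subst; try clash. eapply IHY; eauto.
  - intros G1 i _ N2 G2 j B E. discriminate E.
  - intros G1 B _ IHB N2 G2 j B' E HG H2. injection E as <-.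
    eapply IHB; eauto. apply ctx_compat_cons; [exact HG | constructor].
Qed.

Lemma arity_rigid N1 N2 j t : arity N1 [] j t -> arity N2 [] j t -> N1 = N2.
Proof. intros H1 H2. exact ((proj1 (arity_half_rigid N1)) _ _ _ H1 N2 [] ctx_compat_nil H2). Qed.

(** * The Scott sequence *)

Definition knot (f : term) : term :=
  let w := Lam (App (lift 1 0 f) (App (Var 0) (Var 0))) in App w w.

Lemma Y0_red_knot f : red (App Y0 f) (knot f).
Proof. apply red_beta. reflexivity. Qed.

Lemma B_Y0_red x y : red (App (App (App B Y0) x) y) (App Y0 (App x y)).
Proof.
  eapply rt_trans.
  { apply red_app; [apply red_app; [apply red_beta; reflexivity | apply rt_refl] | apply rt_refl]. }
  eapply rt_trans; [apply red_app; [apply red_beta; reflexivity | apply rt_refl] |].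
  apply red_beta. simpl. rewrite subst_lift_cancel, !lift_zero by lia. reflexivity.
Qed.

Lemma B_Y0_red_knot x y : red (App (App (App B Y0) x) y) (knot (App x y)).
Proof. eapply rt_trans; [apply B_Y0_red | apply Y0_red_knot]. Qed.

Lemma app_iter_add A C p q : app_iter A C (p + q) = app_iter (app_iter A C p) C q.
Proof.
  induction q; simpl.
  - rewrite Nat.add_0_r; reflexivity.
  - rewrite Nat.add_succ_r; simpl. rewrite IHq; reflexivity.
Qed.

Lemma red_app_iter A A' C m : red A A' -> red (app_iter A C m) (app_iter A' C m).
Proof. intros H; induction m; simpl; [exact H | apply red_app; [exact IHm | apply rt_refl]]. Qed.

Definition scott_reduct (n : nat) : term :=
  match n with
  | 0 => Lam (knot (App I (Var 0)))
  | 1 => knot (App S I)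
  | succ (succ m) => App (app_iter (knot (App S S)) S m) I
  end.

Lemma scott_red_reduct n : red (scott n) (scott_reduct n).
Proof.
  unfold scott. destruct n as [|[|m]].
  - simpl. eapply rt_trans; [apply red_app; [apply red_beta; reflexivity | apply rt_refl] |].
    eapply rt_trans; [apply red_beta; reflexivity |].
    apply red_lam, Y0_red_knot.
  - apply B_Y0_red_knot.
  - apply red_app; [|apply rt_refl].
    change (succ (succ m)) with (2 + m). rewrite app_iter_add. apply red_app_iter, B_Y0_red_knot.
Qed.

Lemma arity_knot_spine N G h a :
  atom G (succ N) h -> atom G N a -> arity N G N (knot (App h a)).
Proof.
  intros Hh Ha.
  assert (Hw : half N G (Lam (App (lift 1 0 (App h a)) (App (Var 0) (Var 0))))).
  { apply half_lam, arity_spine.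
    - exact (judge_weaken N G [DHalf] (DAtom (succ N)) h Hh).
    - exact (judge_weaken N G [DHalf] (DAtom N) a Ha).
    - apply arity_knot; apply half_var; reflexivity. }
  exact (arity_knot N G _ _ Hw Hw).
Qed.

Lemma arity_app_S_iter N G M m j : 2 <= j -> arity N G (j + m) M ->
  arity N G j (app_iter M S m).
Proof.
  induction m in j |- *; intros Hj HM; simpl.
  - rewrite Nat.add_0_r in HM. exact HM.
  - apply arity_app; [|apply atom_S; exact Hj].
    apply IHm; [lia | rewrite Nat.add_succ_r in HM; exact HM].
Qed.

Lemma scott_reduct_arity n : arity n [] 1 (scott_reduct n).
Proof.
  destruct n as [|[|m]]; simpl.
  - apply arity_lam, arity_knot_spine; [apply atom_I | apply atom_var; reflexivity].
  - apply arity_knot_spine; [apply atom_S; lia | apply atom_I].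
  - apply arity_app; [|apply atom_I].
    apply arity_app_S_iter; [lia|].
    apply arity_knot_spine; apply atom_S; lia.
Qed.

Theorem corollary6p15 : forall n m : nat, n <> m -> ~ beta_conv (scott n) (scott m).
Proof.
  intros n m Hnm Hconv. apply Hnm.
  assert (Hreducts : beta_conv (scott_reduct n) (scott_reduct m)).
  { eapply rst_trans; [apply rst_sym, red_conv, scott_red_reduct |].
    eapply rst_trans; [exact Hconv | apply red_conv, scott_red_reduct]. }
  destruct (church_rosser _ _ Hreducts) as [t [Hn Hm]].
  apply (arity_rigid n m 1 t).
  - exact (arity_red n [] 1 _ _ Hn (scott_reduct_arity n)).
  - exact (arity_red m [] 1 _ _ Hm (scott_reduct_arity m)).
Qed.
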